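(* Assume the setting in the context, with $\epsilon \in (0,1)$, $\delta = \bigl(1 + \frac{k+3}{2\epsilon}\bigr)^{-1}$, $S_{\mathrm{init}} = \{e^*\}$ with $e^* \in \arg\max_{e \in \mathcal{G}} f(\{e\})$, $f(S_{\mathrm{init}})>0$, and $\alpha = f(S_{\mathrm{init}})\delta/n$. Consider any sequence of improvement steps starting from $S_0 = S_{\mathrm{init}}$ and an arbitrary total order $\prec_0$, where step $j$ picks a $k$-replacement $(A,B)$ for $S_j$ with $\sum_{a \in A} w_{(A,B)}(a)^2 > \sum_{b \in B} w(b)^2$ (weights computed for $S_j$ with respect to $\prec_j$), sets $S_{j+1} = (S_j \setminus B) \cup A$, and sets $\prec_{j+1}$ to be an order in which all elements of $S_j \setminus B$ precede all elements of $A$ and which agrees with $\prec_j$ within $S_j\setminus B$ and within $A$. Then the number of improvement steps is at most $n^3\delta^{-2} = n^3\bigl(1 + \frac{k+3}{2\epsilon}\bigr)^2$; in particular, for fixed $k$, it is $O(n^3\epsilon^{-2})$.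
   Context: Setting. $\mathcal{G}$ is a finite ground set with $|\mathcal{G}| = n$, $f : 2^{\mathcal{G}} \to \mathbb{R}_{\ge 0}$ is a nonnegative monotone submodular function, and $\mathcal{I} \subseteq 2^{\mathcal{G}}$ is a nonempty downward-closed family containing all singletons; $k\ge 1$ is an integer. Weights. For $S \in \mathcal{I}$ and a total order $\prec$, with $S = \{s_1 \prec \dots \prec s_m\}$ and $S_i = \{s_1,\dots,s_i\}$, define $w(s_i) = \lfloor (f(S_{i-1} \cup \{s_i\}) - f(S_{i-1}))/\alpha \rfloor \alpha$. A $k$-replacement for $S$ is a pair $(A,B)$ with $B \subseteq S$, $A \subseteq \mathcal{G} \setminus (S \setminus B)$, $|A| \le k$, $|B| \le k^2 - k + 1$, and $(S \setminus B) \cup A \in \mathcal{I}$. For such a pair, write $A = \{a_1 \prec \dots \prec a_r\}$, $A_i = \{a_1,\dots,a_i\}$, and define $w_{(A,B)}(a_i) = \lfloor (f((S\setminus B) \cup A_{i-1} \cup \{a_i\}) - f((S\setminus B)\cup A_{i-1}))/\alpha \rfloor \alpha$. *)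

From HB Require Import structures.
From mathcomp Require Import all_boot all_order all_algebra.
Set Implicit Arguments. Unset Strict Implicit. Unset Printing Implicit Defensive.
Import Order.TTheory GRing.Theory Num.Theory.
Local Open Scope ring_scope.

(* A total order on the ground set G is represented by an injective rank
   function r : G -> nat, with x ≺ y  iff  r x < r y. *)

Section Defs.
Variables (R : archiRealFieldType) (G : finType).

Definition round_down (alpha x : R) : R := (Num.floor (x / alpha))%:~R * alpha.

Definition pred_in (r : G -> nat) (X : {set G}) (x : G) : {set G} :=
  [set y in X | (r y < r x)%N].

Definition weight (f : {set G} -> R) (alpha : R) (r : G -> nat)
    (S : {set G}) (s : G) : R :=
  round_down alpha (f (pred_in r S s :|: [set s]) - f (pred_in r S s)).

Definition weightAB (f : {set G} -> R) (alpha : R) (r : G -> nat)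
    (S A B : {set G}) (a : G) : R :=
  round_down alpha (f ((S :\: B) :|: pred_in r A a :|: [set a])
                    - f ((S :\: B) :|: pred_in r A a)).

Definition k_replacement (I : {set {set G}}) (k : nat) (S A B : {set G}) : Prop :=
  [/\ B \subset S, A \subset ~: (S :\: B), (#|A| <= k)%N,
      (#|B| <= k ^ 2 - k + 1)%N & (S :\: B) :|: A \in I].

Definition monotone_fn (f : {set G} -> R) : Prop :=
  forall X Y : {set G}, X \subset Y -> f X <= f Y.

Definition submodular_fn (f : {set G} -> R) : Prop :=
  forall X Y : {set G}, f (X :|: Y) + f (X :&: Y) <= f X + f Y.

Definition down_closed (I : {set {set G}}) : Prop :=
  forall X Y : {set G}, Y \in I -> X \subset Y -> X \in I.

End Defs.

From HB Require Import structures.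
From mathcomp Require Import all_boot all_order all_algebra.
From mathcomp Require Import ring lra zify.
Set Implicit Arguments. Unset Strict Implicit. Unset Printing Implicit Defensive.
Import Order.TTheory GRing.Theory Num.Theory.
Local Open Scope ring_scope.

(* The potential of a state
   (S, r) is  Phi = \sum_(s in S) w(s)^2 , the sum of the squared rounded
   marginal weights of S.
   - Every weight is a multiple of alpha, so Phi ranges over integer
     multiples of alpha^2; a strict increase is an increase by >= alpha^2.
   - During a step, the kept elements S \ B only lose predecessors, so by
     submodularity their weights do not decrease; the added elements A sit
     after S \ B, so their new weights are exactly the w_(A,B) weights.  The
     improvement condition therefore forces Phi to grow by >= alpha^2.
   - Every marginal weight is at most f({s}) <= f({e*}), so Phi <= n f({e*})^2.
   Hence m alpha^2 <= n f({e*})^2, which with alpha = f({e*}) delta / n is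
   exactly m <= n^3 delta^-2.  The file proves the facts on rounding, then
   those on marginals of submodular functions, then the one-step increase of
   the potential and its upper bound, and finally the theorem. *)

Section RoundDown.
Variables (R : archiRealFieldType) (alpha : R).
Hypothesis alpha_gt0 : 0 < alpha.

Lemma round_down_ge0 (x : R) : 0 <= x -> 0 <= round_down alpha x.
Proof.
move=> x_ge0; rewrite /round_down mulr_ge0 ?(ltW alpha_gt0) // ler0z floor_ge0.
by rewrite divr_ge0 // ltW.
Qed.

Lemma round_down_le (x : R) : round_down alpha x <= x.
Proof. by rewrite /round_down -ler_pdivlMr //; exact: floor_le. Qed.

Lemma round_down_mono (x y : R) : x <= y -> round_down alpha x <= round_down alpha y.
Proof.
move=> le_xy; rewrite /round_down ler_pM2r // ler_int; apply: le_floor.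
by rewrite ler_pM2r // invr_gt0.
Qed.

Lemma sum_round_down_sqr (I : finType) (X : {pred I}) (g : I -> R) :
  \sum_(i in X) round_down alpha (g i) ^+ 2 =
  (\sum_(i in X) Num.floor (g i / alpha) ^+ 2)%:~R * alpha ^+ 2.
Proof.
rewrite rmorph_sum mulr_suml; apply: eq_bigr => i _.
by rewrite /round_down exprMn rmorphXn.
Qed.

Lemma sum_round_down_sqr_gap (I J : finType) (X : {pred I}) (Y : {pred J})
    (g : I -> R) (h : J -> R) :
  \sum_(i in X) round_down alpha (g i) ^+ 2 < \sum_(j in Y) round_down alpha (h j) ^+ 2 ->
  \sum_(i in X) round_down alpha (g i) ^+ 2 + alpha ^+ 2 <=
  \sum_(j in Y) round_down alpha (h j) ^+ 2.
Proof.
have a2_gt0 : 0 < alpha ^+ 2 by rewrite exprn_gt0.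
rewrite !sum_round_down_sqr ltr_pM2r // ltr_int => lt_int.
rewrite -[X in _ + X <= _]mul1r -mulrDl ler_pM2r // -[1]/(1%:~R) -intrD ler_int.
lia.
Qed.

End RoundDown.

Section Marginals.
Variables (R : archiRealFieldType) (G : finType) (f : {set G} -> R).
Hypotheses (f_mono : monotone_fn f) (f_sub : submodular_fn f).

Lemma marginal_ge0 (X : {set G}) (s : G) : 0 <= f (X :|: [set s]) - f X.
Proof. by rewrite subr_ge0; apply: f_mono; apply: subsetUl. Qed.

Lemma marginal_antitone (X Y : {set G}) (s : G) : X \subset Y ->
  f (Y :|: [set s]) - f Y <= f (X :|: [set s]) - f X.
Proof.
move=> sXY; have [sY|sY] := boolP (s \in Y).
  have -> : Y :|: [set s] = Y by apply/setUidPl; rewrite sub1set.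
  by rewrite subrr marginal_ge0.
have := f_sub (X :|: [set s]) Y.
have -> : X :|: [set s] :|: Y = Y :|: [set s] by rewrite setUAC (setUidPr sXY) setUC.
have -> : (X :|: [set s]) :&: Y = X.
  rewrite setIUl (setIidPl sXY); apply/setUidPl/subsetP=> z.
  by rewrite !inE => /andP[/eqP ->]; rewrite (negbTE sY).
lra.
Qed.

Lemma marginal_le_singleton (X : {set G}) (s : G) :
  (forall Y, 0 <= f Y) -> f (X :|: [set s]) - f X <= f [set s].
Proof. by move=> f_ge0; have := f_sub X [set s]; have := f_ge0 (X :&: [set s]); lra. Qed.

End Marginals.

Definition potential (R : archiRealFieldType) (G : finType) (f : {set G} -> R)
    (alpha : R) (r : G -> nat) (S : {set G}) : R :=
  \sum_(s in S) weight f alpha r S s ^+ 2.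

Lemma potential_split (R : archiRealFieldType) (G : finType) (f : {set G} -> R) (alpha : R)
    (T : {set G}) (r0 : G -> nat) (X Y : {set G}) :
  [disjoint X & Y] -> T = X :|: Y ->
  potential f alpha r0 T =
    \sum_(s in X) weight f alpha r0 T s ^+ 2 + \sum_(s in Y) weight f alpha r0 T s ^+ 2.
Proof.
by move=> dXY ->; rewrite /potential -bigU //; apply: eq_bigl => s; rewrite !inE.
Qed.

Section PotentialBound.
Variables (R : archiRealFieldType) (G : finType) (f : {set G} -> R) (alpha c : R).
Hypotheses (f_ge0 : forall X, 0 <= f X) (f_mono : monotone_fn f)
  (f_sub : submodular_fn f) (alpha_gt0 : 0 < alpha)
  (f_single : forall e : G, f [set e] <= c).

Lemma potential_le (r : G -> nat) (S : {set G}) :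
  potential f alpha r S <= #|G|%:R * c ^+ 2.
Proof.
apply: (@le_trans _ _ (\sum_(s in S) c ^+ 2)).
  apply: ler_sum => s _.
  have c_ge0 : 0 <= c := le_trans (f_ge0 _) (f_single s).
  rewrite ler_pXn2r ?nnegrE ?(round_down_ge0 alpha_gt0) ?marginal_ge0 //.
  apply: le_trans (round_down_le alpha_gt0 _) _.
  exact: le_trans (marginal_le_singleton f_sub _ _ f_ge0) (f_single s).
rewrite sumr_const -[c ^+ 2 *+ _]mulr_natl ler_wpM2r ?sqr_ge0 // ler_nat; exact: max_card.
Qed.

End PotentialBound.

Section ImprovementStep.
Variables (R : archiRealFieldType) (G : finType) (f : {set G} -> R) (alpha : R).
Hypotheses (f_mono : monotone_fn f) (f_sub : submodular_fn f) (alpha_gt0 : 0 < alpha).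

Variables (S A B : {set G}) (r r' : G -> nat).
Let D := S :\: B.
Let S' := D :|: A.
Hypotheses (sub_BS : B \subset S) (sub_A : A \subset ~: D)
  (D_before_A : forall x y, x \in D -> y \in A -> (r' x < r' y)%N)
  (r'_on_D : forall x y, x \in D -> y \in D -> (r' x < r' y)%N = (r x < r y)%N)
  (r'_on_A : forall x y, x \in A -> y \in A -> (r' x < r' y)%N = (r x < r y)%N).

Lemma pred_in_kept (s : G) : s \in D -> pred_in r' S' s \subset pred_in r S s.
Proof.
move=> sD; apply/subsetP=> y /setIdP[/setUP[yD|yA] lt_ys].
  by apply/setIdP; rewrite -(r'_on_D yD sD) (subsetP (subsetDl S B)).
by have := D_before_A sD yA; rewrite ltnNge (ltnW lt_ys).
Qed.

Lemma pred_in_added (a : G) : a \in A -> pred_in r' S' a = D :|: pred_in r A a.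
Proof.
move=> aA; apply/setP=> y.
have inD : (y \in D) = (y \notin B) && (y \in S) by rewrite inE.
rewrite !inE -inD.
have [yD|yD] /= := boolP (y \in D); first by rewrite (D_before_A yD aA).
by case yA: (y \in A) => //=; rewrite (r'_on_A yA aA).
Qed.

Lemma potential_step :
  \sum_(b in B) weight f alpha r S b ^+ 2 <
    \sum_(a in A) weightAB f alpha r S A B a ^+ 2 ->
  potential f alpha r S + alpha ^+ 2 <= potential f alpha r' S'.
Proof.
move=> improving.
have dDB : [disjoint D & B] by rewrite disjoint_sym disjoints_subset setCD subsetUr.
have dDA : [disjoint D & A] by rewrite disjoint_sym disjoints_subset.
have eS : S = D :|: B by rewrite -{1}(setID S B) (setIidPr sub_BS) setUC.
rewrite (potential_split f alpha r dDB eS) (potential_split f alpha r' dDA erefl).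
have kept : \sum_(s in D) weight f alpha r S s ^+ 2 <=
            \sum_(s in D) weight f alpha r' S' s ^+ 2.
  apply: ler_sum => s sD.
  rewrite ler_pXn2r ?nnegrE ?round_down_ge0 ?marginal_ge0 //.
  apply: round_down_mono => //; exact: marginal_antitone (pred_in_kept sD).
have added : \sum_(a in A) weight f alpha r' S' a ^+ 2 =
             \sum_(a in A) weightAB f alpha r S A B a ^+ 2.
  by apply: eq_bigr => a aA; rewrite /weight (pred_in_added aA).
have := sum_round_down_sqr_gap alpha_gt0 improving.
rewrite -added; lra.
Qed.

End ImprovementStep.

Lemma steps_from_potential (R : realFieldType) (m n c d : R) :
  0 < n -> 0 < c -> 0 < d -> m * (c * d / n) ^+ 2 <= n * c ^+ 2 ->
  m <= n ^+ 3 * d ^- 2.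
Proof.
move=> n_gt0 c_gt0 d_gt0 hm.
have e : m * (c * d / n) ^+ 2 * n ^+ 2 / c ^+ 2 = m * d ^+ 2.
  by field; rewrite !lt0r_neq0.
rewrite ler_pdivlMr ?exprn_gt0 // -e ler_pdivrMr ?exprn_gt0 //.
have -> : n ^+ 3 * c ^+ 2 = n * c ^+ 2 * n ^+ 2 by ring.
by rewrite ler_pM2r ?exprn_gt0.
Qed.

Theorem mainTheorem5 (R : archiRealFieldType) (G : finType)
  (f : {set G} -> R) (I : {set {set G}}) (k : nat) (eps : R) (estar : G)
  (Sq : nat -> {set G}) (r : nat -> G -> nat) (A B : nat -> {set G}) (m : nat) :
  (forall X, 0 <= f X) -> monotone_fn f -> submodular_fn f ->
  I != set0 -> down_closed I -> (forall x : G, [set x] \in I) ->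
  (1 <= k)%N ->
  0 < eps -> eps < 1 ->
  (forall e : G, f [set e] <= f [set estar]) ->
  0 < f [set estar] ->
  let n : R := (#|G|)%:R in
  let delta : R := (1 + (k%:R + 3) / (2 * eps))^-1 in
  let alpha : R := f [set estar] * delta / n in
  Sq 0%N = [set estar] ->
  (forall j : nat, (j <= m)%N -> injective (r j)) ->
  (forall j : nat, (j < m)%N ->
     k_replacement I k (Sq j) (A j) (B j) /\
     \sum_(b in B j) (weight f alpha (r j) (Sq j) b) ^+ 2
       < \sum_(a in A j) (weightAB f alpha (r j) (Sq j) (A j) (B j) a) ^+ 2 /\
     Sq j.+1 = (Sq j :\: B j) :|: A j /\
     (forall x y, x \in Sq j :\: B j -> y \in A j -> (r j.+1 x < r j.+1 y)%N) /\
     (forall x y, x \in Sq j :\: B j -> y \in Sq j :\: B j ->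
        (r j.+1 x < r j.+1 y)%N = (r j x < r j y)%N) /\
     (forall x y, x \in A j -> y \in A j ->
        (r j.+1 x < r j.+1 y)%N = (r j x < r j y)%N)) ->
  m%:R <= n ^+ 3 * delta ^- 2.
Proof.
move=> f_ge0 f_mono f_sub _ _ _ _ eps_gt0 _ f_max fstar_gt0 n delta alpha _ _ steps.
have n_gt0 : 0 < n by rewrite ltr0n; apply/card_gt0P; exists estar.
have delta_gt0 : 0 < delta.
  have : 0 <= (k%:R + 3) / (2 * eps) by rewrite divr_ge0 ?addr_ge0 ?mulr_ge0 // ltW.
  by move=> t_ge0; rewrite invr_gt0 (lt_le_trans ltr01) // lerDl.
have alpha_gt0 : 0 < alpha by rewrite /alpha !mulr_gt0 // invr_gt0.
pose Phi j := potential f alpha (r j) (Sq j).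
have growth j : (j <= m)%N -> j%:R * alpha ^+ 2 <= Phi j.
  elim: j => [_|j IH lt_jm]; first by rewrite mul0r sumr_ge0 // => s _; rewrite sqr_ge0.
  have [[sub_BS sub_A _ _ _] [improving [next [before [on_D on_A]]]]] := steps j lt_jm.
  rewrite /Phi next.
  have := potential_step f_mono f_sub alpha_gt0 sub_BS sub_A before on_D on_A improving.
  by have := IH (ltnW lt_jm); rewrite /Phi mulrSr mulrDl mul1r; lra.
apply: steps_from_potential fstar_gt0 delta_gt0 _ => //.
exact: le_trans (growth m (leqnn m)) (potential_le f_ge0 f_mono f_sub alpha_gt0 f_max _ _).
Qed.
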